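(* For every triple $(r,s,t)$ of nonnegative integers with $r+s+t=d$ and $r\ge s\ge t$, there exists a nonzero vector $\mathbf v\in E^*_{[s,t]}V$ with $L_1\mathbf v=L_2\mathbf v=\mathbf 0$. Conversely, if $\mathbf v\in E^*_{[s,t]}V$ is nonzero with $L_1\mathbf v=L_2\mathbf v=\mathbf 0$, then $r=d-s-t\ge s\ge t$.
   Context: Let $d\ge1$, $\mathbb F_3=\{0,1,2\}$, $X=\mathbb F_3^d$, $V=\mathbb C^X$ with standard basis $\{\hat y:y\in X\}$. $E^*_{[s,t]}$ is the diagonal projection onto the span of those $\hat y$ with $y$ having exactly $s$ coordinates equal to $1$ and $t$ equal to $2$. Define linear operators on $V$: $L_1\hat y$ is the sum of $\hat z$ over all $z$ obtained from $y$ by changing exactly one coordinate equal to $1$ into $0$ (empty sum $=0$), and $L_2$ similarly changes one coordinate $2\mapsto1$. *)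

From mathcomp Require Import all_boot all_order all_algebra all_field.
Set Implicit Arguments. Unset Strict Implicit. Unset Printing Implicit Defensive.
Import GRing.Theory Num.Theory.
Local Open Scope ring_scope.

(* X = F_3^d : functions from coordinates 'I_d to F_3 = {0,1,2} = 'I_3 *)
Definition X (d : nat) := {ffun 'I_d -> 'I_3}.

(* V = C^X : vectors indexed by X; v y is the coefficient of the basis vector y^ *)
Definition V (d : nat) := {ffun X d -> algC}.

Definition ncoord (d : nat) (k : nat) (y : X d) : nat :=
  #|[set i : 'I_d | nat_of_ord (y i) == k]|.

Definition upd (d : nat) (y : X d) (i : 'I_d) (a : 'I_3) : X d :=
  [ffun j => if j == i then a else y j].

Definition Estar (d s t : nat) (v : V d) : V d :=
  [ffun y => if (ncoord 1 y == s) && (ncoord 2 y == t) then v y else 0].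

Definition inEstarV (d s t : nat) (v : V d) : Prop := Estar s t v = v.

(* Lowering operator changing one coordinate equal to a into b:
   L y^ = sum over i with y i = a of (upd y i b)^ , extended linearly. *)
Definition Lop (d : nat) (a b : 'I_3) (v : V d) : V d :=
  [ffun z => \sum_(y : X d) \sum_(i : 'I_d | (y i == a) && (z == upd y i b)) v y].

Definition L1 (d : nat) (v : V d) : V d := Lop (inord 1) (inord 0) v.
Definition L2 (d : nat) (v : V d) : V d := Lop (inord 2) (inord 1) v.

(* L1 and L2 are the lowering operators of an sl_3 action on V = (C^3)^{⊗d}, and E*_{[s,t]}V is
   the weight space of weight (r,s,t). For a lowering operator L_ab (changing a into b) the
   adjoint for the standard Hermitian form is L_ba, and L_ab L_ba - L_ba L_ab acts on a weight
   vector as n_b - n_a. Hence if L_ab v = 0 then |L_ba v|^2 = (n_b - n_a) |v|^2, which forces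
   n_a <= n_b; with (a,b) = (1,0) and (2,1) this gives r >= s >= t.
   Conversely, vectors killed by L1 and L2 multiply under tensor products, weights adding up, and
   the antisymmetrisations of 0, 01 and 012 provide such vectors of weights (1,0,0), (1,1,0) and
   (1,1,1) in dimensions 1, 2 and 3; every (r,s,t) with r >= s >= t is a sum of these. *)
From mathcomp Require Import all_boot all_order all_algebra all_field.
From mathcomp Require Import zify.
Import GRing.Theory Num.Theory.
Local Open Scope ring_scope.
Set Implicit Arguments. Unset Strict Implicit.

Lemma exists_ffun_neq0 (T : finType) (R : nmodType) (f : {ffun T -> R}) :
  f != 0 -> exists x, f x != 0.
Proof.
move=> nz; apply/existsP; apply: contraR nz; rewrite negb_exists => /forallP f0.
by apply/eqP/ffunP => x; rewrite ffunE; apply/eqP; rewrite -[_ == _]negbK f0.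
Qed.

Section Lowering.
Variable d : nat.
Implicit Types (y z : X d) (i j : 'I_d) (a b : 'I_3) (v : V d).

Lemma updE y i a j : upd y i a j = if j == i then a else y j.
Proof. by rewrite ffunE. Qed.

Lemma upd_id y i : upd y i (y i) = y.
Proof. by apply/ffunP=> j; rewrite updE; case: eqP => // ->. Qed.

Lemma updK y i a b : upd (upd y i a) i b = upd y i b.
Proof. by apply/ffunP=> j; rewrite !updE; case: eqP. Qed.

Lemma updC y i j a b : i != j -> upd (upd y i a) j b = upd (upd y j b) i a.
Proof.
move=> ij; apply/ffunP=> k; rewrite !updE.
case: (eqVneq k j) => [kj|]; case: (eqVneq k i) => // ki.
by move: ij; rewrite -ki kj eqxx.
Qed.

Lemma LopE a b v z : Lop a b v z = \sum_(i | z i == b) v (upd z i a).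
Proof.
rewrite ffunE; under eq_bigr do rewrite big_mkcond.
rewrite exchange_big /= [RHS]big_mkcond; apply: eq_bigr => i _.
rewrite -big_mkcond /= (eq_bigl (fun y => (z i == b) && (y == upd z i a))); last first.
  move=> y /=; apply/idP/idP => /andP [/eqP yi /eqP ->].
    by rewrite updE updK -yi upd_id !eqxx.
  by rewrite updE updK -yi upd_id !eqxx.
by case: (z i == b) => /=; [rewrite big_pred1_eq | rewrite big_pred0].
Qed.

Lemma Lop0 a b : Lop a b (0 : V d) = 0.
Proof. by apply/ffunP => z; rewrite LopE ffunE big1 // => i _; rewrite ffunE. Qed.

Lemma ncoordE k y : ncoord k y = (\sum_i (nat_of_ord (y i) == k))%N.
Proof.
rewrite /ncoord -sum1dep_card big_mkcond /=; apply: eq_bigr => i _.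
by case: eqP.
Qed.

Lemma ncoord_sum y : (ncoord 0 y + ncoord 1 y + ncoord 2 y)%N = d.
Proof.
rewrite !ncoordE -!big_split /= -[RHS](card_ord d) -sum1_card.
by apply: eq_bigr => i _; case: (y i) => [[|[|[|?]]] ?].
Qed.

Lemma sumr_const_ncoord (k : 'I_3) z (c : algC) :
  \sum_(i | z i == k) c = (ncoord k z)%:R * c.
Proof.
rewrite ncoordE natr_sum mulr_suml big_mkcond /=; apply: eq_bigr => i _.
have -> : (nat_of_ord (z i) == k) = (z i == k) by [].
by case: (z i == k); rewrite ?mul1r ?mul0r.
Qed.

Lemma Lop_LopE a b v z : a != b ->
  Lop a b (Lop b a v) z = (ncoord b z)%:R * v z +
     \sum_(i | z i == b) \sum_(j | z j == a) v (upd (upd z i a) j b).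
Proof.
move=> ab; rewrite LopE -sumr_const_ncoord -big_split /=.
apply: eq_bigr => i /eqP zi; rewrite LopE (bigD1 i) /=; last by rewrite updE eqxx.
rewrite updK -zi upd_id; congr (_ + _); apply: eq_bigl => j.
rewrite updE; case: (eqVneq j i) => [->|_] /=; last by rewrite andbT.
by rewrite andbF zi eq_sym (negbTE ab).
Qed.

Lemma Lop_commutator a b v z : a != b ->
  Lop a b (Lop b a v) z + (ncoord a z)%:R * v z =
  Lop b a (Lop a b v) z + (ncoord b z)%:R * v z.
Proof.
move=> ab; rewrite Lop_LopE // Lop_LopE 1?eq_sym //.
rewrite addrAC [RHS]addrAC [RHS]addrC [LHS]addrC; congr (_ + _); last by rewrite addrC.
rewrite exchange_big /=; apply: eq_bigr => j /eqP zj; apply: eq_bigr => i /eqP zi.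
by rewrite updC //; apply: contra_neq ab => ij; rewrite -zj -zi ij.
Qed.

Definition hdot (u w : V d) : algC := \sum_z w z * (u z)^*.

Lemma hdot_Lop a b (u w : V d) : hdot u (Lop a b w) = hdot (Lop b a u) w.
Proof.
rewrite /hdot; under eq_bigr do rewrite LopE mulr_suml big_mkcond /=.
under [RHS]eq_bigr do rewrite LopE rmorph_sum mulr_sumr big_mkcond /=.
rewrite exchange_big [RHS]exchange_big /=; apply: eq_bigr => i _.
rewrite -!big_mkcond /=.
rewrite (reindex_onto (fun y => upd y i b) (fun z => upd z i a)) /=; last first.
  by move=> z /eqP zi; rewrite updK -zi upd_id.
apply: eq_big => [y|y /andP [_ /eqP ->] //].
rewrite updE !eqxx /= updK; apply/eqP/eqP => [<-|<-]; last by rewrite upd_id.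
by rewrite updE eqxx.
Qed.

Lemma hdot_ge0 (u : V d) : 0 <= hdot u u.
Proof. by apply: sumr_ge0 => z _; apply: mul_conjC_ge0. Qed.

Lemma hdot_gt0 (u : V d) : u != 0 -> 0 < hdot u u.
Proof.
move=> /exists_ffun_neq0 [z uz]; rewrite /hdot (bigD1 z) //=.
by rewrite ltr_wpDr ?mul_conjC_gt0 // sumr_ge0 // => y _; apply: mul_conjC_ge0.
Qed.

Lemma ncoord_le_of_Lop_eq0 a b v (na nb : nat) : a != b -> v != 0 ->
  (forall z, v z != 0 -> ncoord a z = na /\ ncoord b z = nb) ->
  Lop a b v = 0 -> (na <= nb)%N.
Proof.
move=> ab nz supp Lv.
have norm_Lv : hdot (Lop b a v) (Lop b a v) + na%:R * hdot v v = nb%:R * hdot v v.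
  rewrite -hdot_Lop /hdot !mulr_sumr -big_split /=; apply: eq_bigr => z _.
  have [->|vz] := eqVneq (v z) 0; first by rewrite rmorph0 !mulr0 addr0.
  have [na_z nb_z] := supp z vz.
  have := Lop_commutator v z ab; rewrite Lv Lop0 [in X in _ = X]ffunE add0r na_z nb_z => comm.
  by rewrite mulrA -mulrDl comm mulrA.
by rewrite -(ler_nat algC) -(ler_pM2r (hdot_gt0 nz)) -norm_Lv lerDr hdot_ge0.
Qed.

End Lowering.

Lemma inEstarVP d s t (v : V d) :
  inEstarV s t v <-> forall z, v z != 0 -> ncoord 1 z = s /\ ncoord 2 z = t.
Proof.
split=> [<- z|supp]; first by rewrite ffunE; case: ifP => [/andP[/eqP-> /eqP->]|] //; rewrite eqxx.
apply/ffunP => z; rewrite ffunE; case: ifP => // /negbT st; apply/esym/eqP.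
by apply: contraNT st => /supp [-> ->]; rewrite !eqxx.
Qed.

Section Tensor.
Variables d1 d2 : nat.
Implicit Types (y : X (d1 + d2)) (a : 'I_3).

Definition xleft y : X d1 := [ffun i => y (lshift d2 i)].
Definition xright y : X d2 := [ffun j => y (rshift d1 j)].
Definition xcat (y1 : X d1) (y2 : X d2) : X (d1 + d2) :=
  [ffun i => match split i with inl j => y1 j | inr j => y2 j end].
Definition tens (v : V d1) (u : V d2) : V (d1 + d2) :=
  [ffun y => v (xleft y) * u (xright y)].

Lemma xleft_cat (y1 : X d1) (y2 : X d2) : xleft (xcat y1 y2) = y1.
Proof. by apply/ffunP => i; rewrite !ffunE (unsplitK (inl _ i)). Qed.

Lemma xright_cat (y1 : X d1) (y2 : X d2) : xright (xcat y1 y2) = y2.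
Proof. by apply/ffunP => i; rewrite !ffunE (unsplitK (inr _ i)). Qed.

Lemma xleft_updl y i a : xleft (upd y (lshift d2 i) a) = upd (xleft y) i a.
Proof. by apply/ffunP => j; rewrite !ffunE eq_shift. Qed.

Lemma xright_updl y i a : xright (upd y (lshift d2 i) a) = xright y.
Proof. by apply/ffunP => j; rewrite !ffunE eq_shift. Qed.

Lemma xleft_updr y i a : xleft (upd y (rshift d1 i) a) = xleft y.
Proof. by apply/ffunP => j; rewrite !ffunE eq_shift. Qed.

Lemma xright_updr y i a : xright (upd y (rshift d1 i) a) = upd (xright y) i a.
Proof. by apply/ffunP => j; rewrite !ffunE eq_shift. Qed.

Lemma ncoord_tens k y : ncoord k y = (ncoord k (xleft y) + ncoord k (xright y))%N.
Proof.
by rewrite !ncoordE big_split_ord; congr (_ + _)%N; apply: eq_bigr => i _; rewrite ffunE.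
Qed.

Lemma tens_eq0 v u : (tens v u == 0) = (v == 0) || (u == 0).
Proof.
apply/idP/idP => [|/orP[] /eqP->]; last 2 first.
- by apply/eqP/ffunP => y; rewrite !ffunE mul0r.
- by apply/eqP/ffunP => y; rewrite !ffunE mulr0.
apply: contraLR; rewrite negb_or => /andP[/exists_ffun_neq0[y1 v1] /exists_ffun_neq0[y2 u2]].
apply/eqP => /ffunP /(_ (xcat y1 y2)) /eqP.
by rewrite !ffunE xleft_cat xright_cat mulf_eq0 (negbTE v1) (negbTE u2).
Qed.

Lemma Lop_tens a b v u y : Lop a b (tens v u) y =
  Lop a b v (xleft y) * u (xright y) + v (xleft y) * Lop a b u (xright y).
Proof.
rewrite LopE big_split_ord /= !LopE mulr_suml mulr_sumr.
by congr (_ + _); apply: eq_big => i; rewrite ffunE // => _;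
  rewrite ?xleft_updl ?xright_updl ?xleft_updr ?xright_updr.
Qed.

Lemma Lop_tens_eq0 a b v u : Lop a b v = 0 -> Lop a b u = 0 -> Lop a b (tens v u) = 0.
Proof.
by move=> Lv Lu; apply/ffunP => y; rewrite Lop_tens Lv Lu !ffunE mul0r mulr0 addr0.
Qed.

End Tensor.

Definition singular d s t (v : V d) :=
  [/\ v != 0, inEstarV s t v, L1 v = 0 & L2 v = 0].

Definition singular_weight d s t := exists v : V d, singular s t v.

Lemma singular_tens d1 d2 s1 t1 s2 t2 (v : V d1) (u : V d2) :
  singular s1 t1 v -> singular s2 t2 u -> singular (s1 + s2) (t1 + t2) (tens v u).
Proof.
move=> [nz_v /inEstarVP Ev L1v L2v] [nz_u /inEstarVP Eu L1u L2u]; split.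
- by rewrite tens_eq0 negb_or nz_v.
- apply/inEstarVP => y; rewrite ffunE mulf_eq0 negb_or => /andP [/Ev[s1y t1y] /Eu[s2y t2y]].
  by rewrite !(ncoord_tens _ y) s1y t1y s2y t2y.
- exact: Lop_tens_eq0.
- exact: Lop_tens_eq0.
Qed.

Lemma singular_weightD d1 d2 s1 t1 s2 t2 :
  singular_weight d1 s1 t1 -> singular_weight d2 s2 t2 ->
  singular_weight (d1 + d2) (s1 + s2) (t1 + t2).
Proof. by move=> [v sv] [u su]; exists (tens v u); apply: singular_tens. Qed.

Lemma singular_weight0 : singular_weight 0 0 0.
Proof.
exists [ffun => 1]; split.
- by apply/eqP => /ffunP /(_ [ffun => ord0]) /eqP; rewrite !ffunE oner_eq0.
- by apply/inEstarVP => z _; rewrite !ncoordE !big_ord0.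
- by apply/ffunP => z; rewrite LopE big_mkcond big_ord0 ffunE.
- by apply/ffunP => z; rewrite LopE big_mkcond big_ord0 ffunE.
Qed.

Lemma singular_weightMn k d s t :
  singular_weight d s t -> singular_weight (k * d) (k * s) (k * t).
Proof.
move=> sw; elim: k => [|k IHk]; first exact: singular_weight0.
by rewrite !mulSn; apply: singular_weightD.
Qed.

(* The coefficients of the antisymmetrisations of e_0, e_0 ⊗ e_1 and e_0 ⊗ e_1 ⊗ e_2. *)
Definition wedge1_coef (x0 : nat) : algC := if x0 is 0 then 1 else 0.
Definition wedge2_coef (x0 x1 : nat) : algC :=
  match x0, x1 with 0, 1 => 1 | 1, 0 => -1 | _, _ => 0 end.
Definition wedge3_coef (x0 x1 x2 : nat) : algC :=
  match x0, x1, x2 with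
  | 0, 1, 2 | 1, 2, 0 | 2, 0, 1 => 1
  | 0, 2, 1 | 2, 1, 0 | 1, 0, 2 => -1
  | _, _, _ => 0 end.

Definition wedge1 : V 1 := [ffun y : X 1 => wedge1_coef (y ord0)].
Definition wedge2 : V 2 := [ffun y : X 2 => wedge2_coef (y ord0) (y (lift ord0 ord0))].
Definition wedge3 : V 3 := [ffun y : X 3 => wedge3_coef (y ord0) (y (lift ord0 ord0))
  (y (lift ord0 (lift ord0 ord0)))].

Lemma eq_inord (x : 'I_3) k : (k < 3)%N -> (x == inord k) = (nat_of_ord x == k).
Proof. by move=> k3; rewrite -val_eqE /= inordK. Qed.

Ltac case_coord c := case: c => [[|[|[|?]]] ?] //=.
Ltac unfold_small_sums :=
  rewrite ?LopE !ffunE ?big_mkcond /= !big_ord_recl !big_ord0 /= !ffunE /=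
          !eq_inord // !inordK //.

Lemma singular_wedge1 : singular 0 0 wedge1.
Proof.
split.
- by apply/eqP => /ffunP /(_ [ffun => inord 0]) /eqP; rewrite !ffunE inordK // oner_eq0.
- apply/inEstarVP => z; rewrite !ncoordE !big_ord_recl !big_ord0 !ffunE.
  by case_coord (z ord0); rewrite eqxx.
- by apply/ffunP => z; rewrite /L1; unfold_small_sums; case_coord (z ord0); rewrite addr0.
- by apply/ffunP => z; rewrite /L2; unfold_small_sums; case_coord (z ord0); rewrite addr0.
Qed.

Lemma singular_wedge2 : singular 1 0 wedge2.
Proof.
split.
- apply/eqP => /ffunP /(_ [ffun i : 'I_2 => inord i]) /eqP.
  by rewrite !ffunE !inordK // oner_eq0.
- apply/inEstarVP => z; rewrite !ncoordE !big_ord_recl !big_ord0 !ffunE.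
  by case_coord (z ord0); case_coord (z (lift ord0 ord0)); rewrite ?eqxx.
- apply/ffunP => z; rewrite /L1; unfold_small_sums.
  by case_coord (z ord0); case_coord (z (lift ord0 ord0)); rewrite ?addr0 ?add0r ?addNr ?subrr.
- apply/ffunP => z; rewrite /L2; unfold_small_sums.
  by case_coord (z ord0); case_coord (z (lift ord0 ord0)); rewrite ?addr0 ?add0r ?addNr ?subrr.
Qed.

Lemma singular_wedge3 : singular 1 1 wedge3.
Proof.
split.
- apply/eqP => /ffunP /(_ [ffun i : 'I_3 => inord i]) /eqP.
  by rewrite !ffunE !inordK // oner_eq0.
- apply/inEstarVP => z; rewrite !ncoordE !big_ord_recl !big_ord0 !ffunE.
  by case_coord (z ord0); case_coord (z (lift ord0 ord0));
     case_coord (z (lift ord0 (lift ord0 ord0))); rewrite ?eqxx.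
- apply/ffunP => z; rewrite /L1; unfold_small_sums.
  by case_coord (z ord0); case_coord (z (lift ord0 ord0));
     case_coord (z (lift ord0 (lift ord0 ord0))); rewrite ?addr0 ?add0r ?addNr ?subrr.
- apply/ffunP => z; rewrite /L2; unfold_small_sums.
  by case_coord (z ord0); case_coord (z (lift ord0 ord0));
     case_coord (z (lift ord0 (lift ord0 ord0))); rewrite ?addr0 ?add0r ?addNr ?subrr.
Qed.

Lemma singular_weight_wedges a b c :
  singular_weight (a + b * 2 + c * 3) (b + c) c.
Proof.
have := singular_weightD (singular_weightMn a (ex_intro _ _ singular_wedge1))
        (singular_weightD (singular_weightMn b (ex_intro _ _ singular_wedge2))
                          (singular_weightMn c (ex_intro _ _ singular_wedge3))).
by rewrite !muln0 !muln1 !add0n addnA.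
Qed.

Lemma singular_weight_dominant r s t :
  (t <= s)%N -> (s <= r)%N -> singular_weight (r + s + t) s t.
Proof.
move=> ts sr; have := singular_weight_wedges (r - s) (s - t) t.
by rewrite subnK // (_ : r - s + (s - t) * 2 + t * 3 = r + s + t)%N //; lia.
Qed.

Lemma singular_weight_bound d s t : singular_weight d s t ->
  [/\ (s + t <= d)%N, (s <= d - s - t)%N & (t <= s)%N].
Proof.
move=> [v [nz /inEstarVP supp L1v L2v]].
have supp0 z : v z != 0 -> ncoord 0 z = (d - s - t)%N.
  by move=> /supp [e1 e2]; have := ncoord_sum z; rewrite e1 e2; lia.
have [z0 /supp [e1 e2]] := exists_ffun_neq0 nz.
split.
- by rewrite -(ncoord_sum z0) e1 e2; lia.
- apply: (ncoord_le_of_Lop_eq0 (a := inord 1) (b := inord 0) _ nz) L1v.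
    by rewrite -val_eqE /= !inordK.
  by move=> z vz; rewrite !inordK //; split; [case: (supp z vz) | apply: supp0].
- apply: (ncoord_le_of_Lop_eq0 (a := inord 2) (b := inord 1) _ nz) L2v.
    by rewrite -val_eqE /= !inordK.
  by move=> z vz; rewrite !inordK //; case: (supp z vz).
Qed.

(* Otherwise [d], being determined by the type of [hd], would become implicit. *)
Unset Implicit Arguments.

Theorem lemma4p4 (d : nat) (hd : (1 <= d)%N) :
  (forall r s t : nat, (r + s + t)%N = d -> (t <= s)%N -> (s <= r)%N ->
     exists v : V d, v != 0 /\ inEstarV s t v /\ L1 v = 0 /\ L2 v = 0)
  /\
  (forall (s t : nat) (v : V d), v != 0 -> inEstarV s t v -> L1 v = 0 -> L2 v = 0 ->
     [/\ (s + t <= d)%N, (s <= d - s - t)%N & (t <= s)%N]).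
Proof.
split=> [r s t <- ts sr | s t v nz Ev L1v L2v].
- have [v [nz Ev L1v L2v]] := singular_weight_dominant ts sr.
  by exists v.
- by apply: singular_weight_bound; exists v.
Qed.
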